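(* Let $(V_n)_{n\geq 1}$ be an eventually polynomial sequence of representations, $V_n$ a representation of $S_n$. Then there exists $N$ such that the sign representation does not occur in $V_n$ for all $n\geq N$. In particular, for every partition $\lambda$, the sign representation of $S_n$ does not occur in the restriction of $W_\lambda(\mathbb C^n)$ to $S_n$ for any $n>|\lambda|+1$.
   Context: For $i\geq1$, $X_i(\sigma)$ denotes the number of $i$-cycles of a permutation $\sigma$. A sequence $(V_n)$ with $V_n$ a representation of $S_n$ is eventually polynomial if there exist $p\in\mathbb C[X_1,X_2,\dotsc]$ and $N\geq0$ such that $p(X_1(\sigma),X_2(\sigma),\dotsc)$ equals the character of $V_n$ at $\sigma$ for all $n\geq N$ and $\sigma\in S_n$. $W_\lambda(\mathbb C^n)$ is the irreducible polynomial representation (Weyl module) of $GL_n(\mathbb C)$ indexed by $\lambda$ (zero if $\lambda$ has more than $n$ parts), and $S_n$ is embedded in $GL_n(\mathbb C)$ as permutation matrices. *)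

From HB Require Import structures.
From mathcomp Require Import all_boot all_order all_algebra all_fingroup.
From mathcomp Require Import all_solvable all_field all_character.
From mathcomp Require Import mpoly.

Set Implicit Arguments.
Unset Strict Implicit.
Unset Printing Implicit Defensive.

Import GRing.Theory Num.Theory.
Local Open Scope ring_scope.

(* Cycle counts: X_i(s) = number of i-cycles of s (fixed points are    *)
(* 1-cycles; porbits s is the set of all cycles of s).                 *)
Definition ncycles (n : nat) (s : 'S_n) (i : nat) : nat :=
  #|[set C in porbits s | #|C| == i]|.

(* A sequence (V_n) of representations of S_n (V_n of degree d n) is   *)
(* eventually polynomial: there are finitely many variables X_1..X_k, *)
(* a polynomial p in C[X_1,..,X_k] (variable j : 'I_k stands for       *)
(* X_(j+1)) and N with chi_{V_n}(s) = p(X_1(s),...,X_k(s)) for n >= N. *)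
Definition eventually_polynomial (d : nat -> nat)
    (rV : forall n, mx_representation algC [set: 'S_n]%G (d n)) : Prop :=
  exists (k : nat) (p : {mpoly algC[k]}) (N : nat),
    forall n, (N <= n)%N -> forall s : 'S_n,
      cfRepr (rV n) s = p.@[fun j : 'I_k => (ncycles s j.+1)%:R].

Definition sign_mx n (s : 'S_n) : 'M[algC]_1 := ((-1) ^+ odd_perm s)%:M.

Lemma sign_mx_repr n : mx_repr [set: 'S_n] (@sign_mx n).
Proof.
split; first by rewrite /sign_mx odd_perm1 expr0.
move=> x y _ _; rewrite /sign_mx odd_permM signr_addb.
by rewrite -scalar_mxM.
Qed.

Definition sign_repr n : mx_representation algC [set: 'S_n]%G 1 :=
  MxRepresentation (@sign_mx_repr n).

(* The tensor power (C^n)^{(x)k}, with basis e_f indexed by            *)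
(* f : {ffun 'I_k -> 'I_n} (e_f = e_{f 0} (x) ... (x) e_{f (k-1)}),      *)
(* vectors being row vectors.  matF F is the matrix of e_f |-> e_{F f}. *)
Definition tdim k n := #|{ffun 'I_k -> 'I_n}|.

Definition matF k n (F : {ffun 'I_k -> 'I_n} -> {ffun 'I_k -> 'I_n})
  : 'M[algC]_(tdim k n) :=
  \matrix_(i, j) ((F (enum_val i) == enum_val j)%:R).

Lemma matF_mul k n (F G : {ffun 'I_k -> 'I_n} -> {ffun 'I_k -> 'I_n}) :
  matF F *m matF G = matF (G \o F).
Proof.
apply/matrixP => i j; rewrite !mxE (bigD1 (enum_rank (F (enum_val i)))) //=.
rewrite !mxE enum_rankK eqxx mul1r big1 ?addr0 // => l Hl.
rewrite !mxE; case: eqP => [E|]; last by rewrite mul0r.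
by rewrite E enum_valK eqxx in Hl.
Qed.

Lemma eq_matF k n (F G : {ffun 'I_k -> 'I_n} -> {ffun 'I_k -> 'I_n}) :
  (forall f, F f = G f) -> matF F = matF G.
Proof. by move=> E; apply/matrixP => i j; rewrite !mxE E. Qed.

Lemma matF_id k n : matF (@id {ffun 'I_k -> 'I_n}) = 1%:M.
Proof.
by apply/matrixP => i j; rewrite !mxE (inj_eq enum_val_inj).
Qed.

(* S_n acting on (C^n)^{(x)k} as (the restriction to permutation       *)
(* matrices of) g |-> g^{(x)k}: e_f |-> e_{s o f}.                      *)
Definition tens_act k n (s : 'S_n) : 'M[algC]_(tdim k n) :=
  matF (fun f => [ffun p => s (f p)]).

Lemma tens_act_repr k n : mx_repr [set: 'S_n] (@tens_act k n).
Proof.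
split.
  rewrite /tens_act -(@matF_id k n); apply: eq_matF => f.
  by apply/ffunP => p; rewrite ffunE perm1.
move=> x y _ _; rewrite /tens_act matF_mul; apply: eq_matF => f.
by apply/ffunP => p; rewrite /= !ffunE permM.
Qed.

Definition tens_repr k n : mx_representation algC [set: 'S_n]%G (tdim k n) :=
  MxRepresentation (@tens_act_repr k n).

Definition pos_act k n (t : 'S_k) : 'M[algC]_(tdim k n) :=
  matF (fun f : {ffun 'I_k -> 'I_n} => [ffun p => f (t p)]).

Lemma pos_tens_comm k n (t : 'S_k) (s : 'S_n) :
  pos_act n t *m tens_act k s = tens_act k s *m pos_act n t.
Proof.
rewrite /pos_act /tens_act !matF_mul; apply: eq_matF => f.
by apply/ffunP => p; rewrite /= !ffunE.
Qed.

Definition is_partition (la : seq nat) : bool :=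
  sorted geq la && all (fun x => 0 < x)%N la.

(* The Young diagram of la, its cells numbered 0..|la|-1 row by row    *)
(* (the row-reading tableau).  Row and column of cell p.               *)
Definition rowof (la : seq nat) (p : nat) : nat :=
  count (fun r => sumn (take r.+1 la) <= p)%N (iota 0 (size la)).
Definition colof (la : seq nat) (p : nat) : nat :=
  (p - sumn (take (rowof la p) la))%N.

Definition row_group (la : seq nat) : {set 'S_(sumn la)} :=
  [set t : 'S_(sumn la) | [forall p, rowof la (t p) == rowof la p]].
Definition col_group (la : seq nat) : {set 'S_(sumn la)} :=
  [set t : 'S_(sumn la) | [forall p, colof la (t p) == colof la p]].

Definition young (la : seq nat) (n : nat) : 'M[algC]_(tdim (sumn la) n) :=
  \sum_(r in row_group la) \sum_(c in col_group la)
     ((-1) ^+ odd_perm c) *: (pos_act n r *m pos_act n c).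

Lemma young_comm la n (s : 'S_n) :
  young la n *m tens_act (sumn la) s = tens_act (sumn la) s *m young la n.
Proof.
rewrite /young mulmx_suml mulmx_sumr; apply: eq_bigr => r _.
rewrite mulmx_suml mulmx_sumr; apply: eq_bigr => c _.
rewrite -scalemxAl -scalemxAr; congr (_ *: _).
by rewrite -mulmxA pos_tens_comm mulmxA pos_tens_comm mulmxA.
Qed.

(* The Weyl module W_la(C^n) = image of the Young symmetrizer on         *)
(* (C^n)^{(x)|la|} (Fulton-Harris), which is zero when la has more than  *)
(* n parts; it is stable under GL_n, in particular under S_n.          *)
Lemma young_module la n : mxmodule (tens_repr (sumn la) n) (young la n).
Proof.
apply/mxmoduleP => s _; rewrite /= young_comm; exact: submxMl.
Qed.

Definition weyl_res (la : seq nat) (n : nat) :=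
  submod_repr (young_module la n).

(* The pairing of a character with the sign character is #|S_n|^-1 times
   its signed sum over S_n.  If a function g on S_n and a set U(s) of at most
   n - 2 points are unchanged when s is replaced by t s, for t a transposition
   of two points outside U(s), then s |-> t s is a sign-reversing involution
   and the signed sum of g vanishes.  Since X_j(s) is 1/j times the number of
   points lying in an s-orbit of size j, a monomial of weighted degree w in
   the cycle counts (X_j having degree j) expands into products of indicators
   [#|s-orbit of x_t| = l_t] with sum_t l_t = w; where such a product is
   nonzero, the union U(s) of these orbits has at most w points.  Hence the
   signed sum of the monomial vanishes once n >= w + 2.  The character of
   (C^n)^{(x)k} is X_1^k, and W_la(C^n) is a direct summand of it. *)

From HB Require Import structures.
From mathcomp Require Import all_boot all_order all_algebra all_fingroup.
From mathcomp Require Import all_solvable all_field all_character.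
From mathcomp Require Import mpoly zify.

Set Implicit Arguments.
Unset Strict Implicit.
Unset Printing Implicit Defensive.

Import GRing.Theory Num.Theory.
Local Open Scope ring_scope.

Lemma sum_sign_tperm_invariant_eq0 (R : numDomainType) n (g : 'S_n -> R)
    (U : 'S_n -> {set 'I_n}) :
  (forall s, g s != 0 -> (#|U s| + 2 <= n)%N) ->
  (forall s u v, g s != 0 -> u \notin U s -> v \notin U s ->
     U (tperm u v * s)%g = U s /\ g (tperm u v * s)%g = g s) ->
  \sum_(s : 'S_n) (-1) ^+ odd_perm s * g s = 0.
Proof.
case: n g U => [|n] g U Ucard Uinv.
  apply: big1 => s _.
  by have [->|/Ucard] := eqVneq (g s) 0; rewrite ?mulr0 ?addn2.
pose e s := enum (~: U s).
pose u s := nth ord0 (e s) 0; pose v s := nth ord0 (e s) 1.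
(* [u s] and [v s] only depend on [U s], hence [phi] is an involution. *)
pose phi s := if g s != 0 then (tperm (u s) (v s) * s)%g else s.
have uvP s : g s != 0 -> [/\ u s \notin U s, v s \notin U s & u s != v s].
  move=> gs; have e_gt1 : (1 < size (e s))%N.
    by move: (Ucard s gs); rewrite /e -cardE cardsCs card_ord; lia.
  have := mem_nth ord0 e_gt1; have := mem_nth ord0 (ltnW e_gt1).
  rewrite !mem_enum !inE => uU vU; split=> //.
  by rewrite nth_uniq ?enum_uniq // ltnW.
have phiK : involutive phi.
  move=> s; rewrite /phi; case gs: (g s != 0); last by rewrite gs.
  have [uU vU _] := uvP s gs; have [Ut gt] := Uinv s _ _ gs uU vU.
  by rewrite gt gs /u /v /e Ut mulgA tperm2 mul1g.
have phi_sign s :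
    (-1) ^+ odd_perm (phi s) * g (phi s) = - ((-1) ^+ odd_perm s * g s).
  rewrite /phi; case gs: (g s != 0); last first.
    by move/negbFE/eqP: gs => ->; rewrite !mulr0 oppr0.
  have [uU vU uv] := uvP s gs; have [_ ->] := Uinv s _ _ gs uU vU.
  by rewrite odd_permM odd_tperm uv signr_addb mulN1r mulNr.
set S := \sum_s _; apply/eqP; rewrite -eqNr; apply/eqP.
rewrite {2}/S (reindex_inj (can_inj phiK)) /= -sumrN.
by apply: eq_bigr => s _; rewrite phi_sign.
Qed.

Lemma eq_in_porbit (T : finType) (s s' : {perm T}) y :
  {in porbit s y, s' =1 s} -> porbit s' y = porbit s y.
Proof.
move=> eq_ss'; have iter_eq i : (s' ^+ i)%g y = (s ^+ i)%g y.
  elim: i => [|i IHi]; first by rewrite !expg0.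
  by rewrite !expgSr !permM IHi eq_ss' // mem_porbit.
by apply/setP => z; apply/porbitP/porbitP => -[i ->]; exists i.
Qed.

Lemma leq_card_bigcup (I T : finType) (F : I -> {set T}) :
  (#|\bigcup_i F i| <= \sum_i #|F i|)%N.
Proof.
elim/big_rec2: _ => [|i A m _ le_Am]; first by rewrite cards0.
by rewrite (leq_trans (leq_card_setU _ _)) ?leq_add2l.
Qed.

Lemma sum_sign_porbit_sizes_eq0 (R : numDomainType) n (J : finType)
    (l : J -> nat) (x : J -> 'I_n) :
  (\sum_t l t + 2 <= n)%N ->
  \sum_(s : 'S_n) (-1) ^+ odd_perm s *
     \prod_t ((#|porbit s (x t)| == l t)%:R : R) = 0.
Proof.
move=> l_small.
apply: (sum_sign_tperm_invariant_eq0 (U := fun s => \bigcup_t porbit s (x t))).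
  move=> s /prodf_neq0 size_l; apply: leq_trans l_small.
  rewrite leq_add2r (leq_trans (leq_card_bigcup _)) // leq_sum // => t _.
  by move: (size_l t isT); rewrite pnatr_eq0 eqb0 negbK => /eqP->.
move=> s u v _ uU vU.
have orbit_tperm t : porbit (tperm u v * s)%g (x t) = porbit s (x t).
  apply: eq_in_porbit => z zP; rewrite permM tpermD //.
    by apply: contraNneq uU => ->; apply/bigcupP; exists t.
  by apply: contraNneq vU => ->; apply/bigcupP; exists t.
by split; apply: eq_bigr => t _; rewrite orbit_tperm.
Qed.

Lemma sum_porbit_size_eq n (s : 'S_n) j :
  (\sum_(y : 'I_n) (#|porbit s y| == j) = ncycles s j * j)%N.
Proof.
set A := [set C in porbits s | #|C| == j].
transitivity (\sum_(y : 'I_n) \sum_(C in A) (y \in C : nat))%N.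
  apply: eq_bigr => y _; rewrite big_mkcond (bigD1 (porbit s y)) //= big1.
    by rewrite inE imset_f // porbit_id addn0; case: (_ == j).
  move=> C; rewrite [C \in A]inE; case: ifP => // /andP[/imsetP[z _ ->] _].
  by rewrite eq_porbit_mem porbit_sym => /negbTE->.
rewrite exchange_big /= -sum_nat_const; apply: eq_bigr => C.
rewrite inE => /andP[_ /eqP <-].
by rewrite -sum1_card [RHS]big_mkcond.
Qed.

Lemma ncyclesE (R : numFieldType) n (s : 'S_n) j : (0 < j)%N ->
  (ncycles s j)%:R = \sum_(y : 'I_n) ((#|porbit s y| == j)%:R / j%:R : R).
Proof.
move=> j_gt0; rewrite -mulr_suml -natr_sum sum_porbit_size_eq natrM mulfK //.
by rewrite pnatr_eq0 -lt0n.
Qed.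

Lemma sum_sign_prod_ncycles_eq0 (R : numFieldType) n (J : finType)
    (l : J -> nat) :
  (forall t, 0 < l t)%N -> (\sum_t l t + 2 <= n)%N ->
  \sum_(s : 'S_n) (-1) ^+ odd_perm s * \prod_t ((ncycles s (l t))%:R : R) = 0.
Proof.
move=> l_gt0 l_small.
under eq_bigr => s _ do rewrite (eq_bigr _ (fun t _ => ncyclesE R s (l_gt0 t)))
  bigA_distr_bigA mulr_sumr.
rewrite exchange_big big1 //= => x _.
transitivity (\prod_t ((l t)%:R : R)^-1 * \sum_(s : 'S_n)
    (-1) ^+ odd_perm s * \prod_t ((#|porbit s (x t)| == l t)%:R : R)).
  by rewrite mulr_sumr; apply: eq_bigr => s _; rewrite big_split /= mulrA mulrC.
by rewrite (sum_sign_porbit_sizes_eq0 R x l_small) mulr0.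
Qed.

Definition cycle_weight k (m : 'X_{1..k}) : nat := \sum_(i < k) m i * i.+1.

Lemma sum_sign_monomial_ncycles_eq0 (R : numFieldType) n k (m : 'X_{1..k}) :
  (cycle_weight m + 2 <= n)%N ->
  \sum_(s : 'S_n) (-1) ^+ odd_perm s *
     \prod_(i < k) ((ncycles s i.+1)%:R : R) ^+ m i = 0.
Proof.
pose l (p : {i : 'I_k & 'I_(m i)}) := (tag p).+1.
have weightE : cycle_weight m = (\sum_p l p)%N.
  rewrite -(sig_big_dep xpredT (fun _ => xpredT)
              (fun (i : 'I_k) (_ : 'I_(m i)) => i.+1)) /cycle_weight /=.
  by apply: eq_bigr => i _; rewrite sum_nat_const card_ord.
rewrite weightE => l_small.
rewrite -[RHS](sum_sign_prod_ncycles_eq0 R _ l_small) //.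
apply: eq_bigr => s _; congr (_ * _).
rewrite -(sig_big_dep xpredT (fun _ => xpredT)
           (fun (i : 'I_k) (_ : 'I_(m i)) => (ncycles s i.+1)%:R : R)) /=.
by apply: eq_bigr => i _; rewrite prodr_const card_ord.
Qed.

Lemma sum_sign_meval_ncycles_eq0 (R : numFieldType) n k (p : {mpoly R[k]}) :
  (\max_(m <- msupp p) cycle_weight m + 2 <= n)%N ->
  \sum_(s : 'S_n) (-1) ^+ odd_perm s *
     p.@[fun i : 'I_k => (ncycles s i.+1)%:R] = 0.
Proof.
move=> p_small.
under eq_bigr => s _ do rewrite mevalE mulr_sumr.
rewrite exchange_big big_seq big1 // => m m_p.
under eq_bigr => s _ do rewrite mulrCA.
rewrite -mulr_sumr sum_sign_monomial_ncycles_eq0 ?mulr0 //.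
by apply: (leq_trans _ p_small); rewrite leq_add2r; apply: leq_bigmax_seq.
Qed.

Lemma cfRepr_sign_repr n (s : 'S_n) :
  cfRepr (sign_repr n) s = (-1) ^+ odd_perm s.
Proof. by rewrite cfunE in_setT mulr1n mxtrace_scalar. Qed.

Lemma cfdot_sign_repr n (chi : 'CF([set: 'S_n])) :
  '[chi, cfRepr (sign_repr n)] =
  #|[set: 'S_n]|%:R^-1 * \sum_(s : 'S_n) (-1) ^+ odd_perm s * chi s.
Proof.
rewrite cfdotE; congr (_ * _); apply: eq_big => [s|s _]; first by rewrite inE.
by rewrite cfRepr_sign_repr rmorph_sign mulrC.
Qed.

Lemma eventually_polynomial_cfdot_sign_eq0 (d : nat -> nat)
    (rV : forall n, mx_representation algC [set: 'S_n]%G (d n)) :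
  eventually_polynomial rV ->
  exists N, forall n, (N <= n)%N -> '[cfRepr (rV n), cfRepr (sign_repr n)] = 0.
Proof.
move=> [k [p [N rV_p]]].
exists (maxn N (\max_(m <- msupp p) cycle_weight m + 2)) => n.
rewrite geq_max => /andP[N_n p_small].
rewrite cfdot_sign_repr (eq_bigr _ (fun s _ => congr1 _ (rV_p n N_n s))).
by rewrite sum_sign_meval_ncycles_eq0 ?mulr0.
Qed.

Lemma mxtrace_matF k n (F : {ffun 'I_k -> 'I_n} -> {ffun 'I_k -> 'I_n}) :
  \tr (matF F) = #|[pred f | F f == f]|%:R.
Proof.
rewrite /mxtrace (eq_bigr _ (fun i _ => mxE _ _ i i)) /=.
rewrite -(big_enum_val (fun f => (F f == f)%:R)) -sum1_card natr_sum.
rewrite big_mkcond [RHS]big_mkcond; apply: eq_bigr => f _.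
by rewrite inE; case: eqP.
Qed.

Lemma card_porbit_eq1 (T : finType) (s : {perm T}) y :
  (#|porbit s y| == 1%N) = (s y == y).
Proof.
apply/cards1P/eqP => [[z yz]|sy].
  have /set1P-> : s y \in [set z] by rewrite -yz -{1}[s]expg1 mem_porbit.
  by apply/esym/set1P; rewrite -yz porbit_id.
exists y; apply/setP => z; rewrite inE; apply/porbitP/eqP => [[i ->]|->].
  by elim: i => [|i IHi]; rewrite ?expg0 ?perm1 // expgSr permM IHi sy.
by exists 0%N; rewrite expg0 perm1.
Qed.

Lemma card_fixed_points n (s : 'S_n) : #|[pred y | s y == y]| = ncycles s 1.
Proof.
rewrite -[RHS]muln1 -sum_porbit_size_eq -sum1_card big_mkcond.
by apply: eq_bigr => y _; rewrite card_porbit_eq1 inE.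
Qed.

Lemma cfRepr_tens_repr k n (s : 'S_n) :
  cfRepr (tens_repr k n) s = (ncycles s 1)%:R ^+ k.
Proof.
rewrite cfunE in_setT mulr1n mxtrace_matF -card_fixed_points -natrX.
rewrite -[in RHS](card_ord k) -card_ffun_on; congr (_%:R); apply: eq_card => f.
rewrite !inE; apply/eqP/ffun_onP => [fix_f t|fixed_f].
  by rewrite inE -{2}fix_f ffunE.
by apply/ffunP => t; rewrite ffunE (eqP (fixed_f t)).
Qed.

Lemma cfdot_tens_repr_sign_eq0 k n : (k + 2 <= n)%N ->
  '[cfRepr (tens_repr k n), cfRepr (sign_repr n)] = 0.
Proof.
move=> k_small; rewrite cfdot_sign_repr (_ : \sum_s _ = 0) ?mulr0 //.
rewrite -[RHS](@sum_sign_prod_ncycles_eq0 _ n _ (fun _ : 'I_k => 1%N)) //.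
  by apply: eq_bigr => s _; rewrite cfRepr_tens_repr prodr_const card_ord.
by rewrite sum_nat_const card_ord muln1.
Qed.

Lemma cfdot_submod_repr_eq0 (gT : finGroupType) (G : {group gT}) n
    (rG : mx_representation algC G n) (U : 'M_n) (modU : mxmodule rG U)
    (phi : 'CF(G)) :
  phi \is a character -> '[cfRepr rG, phi] = 0 ->
  '[cfRepr (submod_repr modU), phi] = 0.
Proof.
move=> phi_char rG_phi.
have [W modW sumUW dxUW] :=
  mx_Maschke_pchar rG (algC'G_pchar G) modU (submx1 U).
have rG_UW : cfRepr rG = cfRepr (submod_repr modU) + cfRepr (submod_repr modW).
  have := cfRepr_sim (mx_rsim_dadd (rU := Representation (submod_repr modU))
    (rV := Representation (submod_repr modW)) (mxmodule1 rG) sumUW dxUW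
    (mx_rsim_refl _) (mx_rsim_refl _)).
  by rewrite cfRepr_dadd (cfRepr_sim (rsim_submod1 _ (eqmx_refl _))).
have dot_ge0 V (modV : mxmodule rG V) :
    0 <= '[cfRepr (submod_repr modV), phi].
  by rewrite natr_ge0 // Cnat_cfdot_char ?cfRepr_char.
move/eqP: rG_phi; rewrite rG_UW cfdotDl paddr_eq0 ?dot_ge0 //.
by case/andP => /eqP.
Qed.

Theorem corollary2p6 :
  (forall (d : nat -> nat)
          (rV : forall n, mx_representation algC [set: 'S_n]%G (d n)),
     eventually_polynomial rV ->
     exists N : nat, forall n : nat, (N <= n)%N ->
       '[cfRepr (rV n), cfRepr (sign_repr n)] = 0)
  /\
  (forall la : seq nat, is_partition la ->
     forall n : nat, ((sumn la).+1 < n)%N ->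
       '[cfRepr (weyl_res la n), cfRepr (sign_repr n)] = 0).
Proof.
split; first exact: eventually_polynomial_cfdot_sign_eq0.
move=> la _ n la_small; apply: cfdot_submod_repr_eq0; first exact: cfRepr_char.
by apply: cfdot_tens_repr_sign_eq0; rewrite addn2.
Qed.
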